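(* Let $X$ be a nonnegative absolutely continuous random variable with pdf $f$ such that $f(t)>0$ for all $t\in(0,r)$, where $r\in(0,\infty]$; let $\overline F(t)=\mathbb P(X>t)$. For $t\ge0$ with $\overline F(t)>0$, let $X_t=[X-t\mid X>t]$ be the residual lifetime with pdf $f_t(x)=f(x+t)/\overline F(t)$, $x>0$, let $H(X_t)=-\mathbb E[\log f_t(X_t)]$ be the residual entropy, $V(X_t)=\mathrm{Var}[\log f_t(X_t)]$ the residual varentropy, and $\lambda(t)=f(t)/\overline F(t)$ the hazard rate. Let $V(X)=\mathrm{Var}[\log f(X)]$ (so $V(X)=V(X_0)$). (i) If there is $v\ge 0$ with $V(X_t)=v$ for all $t\in[0,r)$, then $|H(X_t)+\log\lambda(t)|=\sqrt v$ for all $t\in(0,r)$. (ii) If $c\in\mathbb R$ and $H(X_t)+\log\lambda(t)=c$ for all $t\in(0,r)$, then $$V(X_t)=c^2+\frac{V(X)-c^2}{\overline F(t)}\qquad\text{for all }t\in[0,r).$$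
   Context: $[X\mid B]$ denotes a random variable distributed as $X$ conditional on the event $B$. The convention $0\log0=0$ is used. *)

From HB Require Import structures.
From mathcomp Require Import all_boot all_order all_algebra.
From mathcomp Require Import all_classical all_reals all_analysis.
Set Implicit Arguments. Unset Strict Implicit. Unset Printing Implicit Defensive.
Import Order.TTheory GRing.Theory Num.Theory.
Import numFieldNormedType.Exports.
Local Open Scope classical_set_scope.
Local Open Scope ring_scope.

Section Lifetime.
Variable R : realType.
Notation leb := (@lebesgue_measure R).

Definition is_pdf (f : R -> R) : Prop :=
  [/\ measurable_fun setT f,
      (forall x, 0 <= f x),
      (forall x, x < 0 -> f x = 0) &
      (\int[leb]_(x in setT) (f x)%:E = 1)%E].

Definition survival (f : R -> R) (t : R) : R :=
  Rintegral leb `]t, +oo[ f.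

Definition resid_pdf (f : R -> R) (t : R) (x : R) : R :=
  f (x + t) / survival f t.

Definition hazard (f : R -> R) (t : R) : R := f t / survival f t.

(* residual entropy H(X_t) = - E[log f_t(X_t)]  (convention 0 log 0 = 0;
   note ln 0 = 0 in mathcomp-analysis) *)
Definition residual_entropy (f : R -> R) (t : R) : R :=
  - Rintegral leb `]0, +oo[
      (fun x => resid_pdf f t x * ln (resid_pdf f t x)).

Definition residual_varentropy (f : R -> R) (t : R) : R :=
  Rintegral leb `]0, +oo[
    (fun x => resid_pdf f t x *
              (ln (resid_pdf f t x) + residual_entropy f t) ^+ 2).

Definition entropy (f : R -> R) : R :=
  - Rintegral leb setT (fun x => f x * ln (f x)).

Definition varentropy (f : R -> R) : R :=
  Rintegral leb setT (fun x => f x * (ln (f x) + entropy f) ^+ 2).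

End Lifetime.

From HB Require Import structures.
From mathcomp Require Import all_boot all_order all_algebra.
From mathcomp Require Import all_classical all_reals all_analysis.
From mathcomp Require Import ring lra measurable_realfun.
Import Order.TTheory GRing.Theory Num.Theory.
Import numFieldNormedType.Exports.
Local Open Scope classical_set_scope.
Local Open Scope ring_scope.

(* Write F for the survival function, G(t) = \int_t^oo f ln f and
   K(t) = \int_t^oo f ln^2 f.  Translating by t gives H(X_t) = ln F - G/F and
   V(X_t) = W/F with W = K - G^2/F, so that H(X_t) + ln lambda(t) = ln f - G/F =: m.
   As F' = -f, G' = -f ln f and K' = -f ln^2 f where f is continuous, W' = -f m^2,
   hence (W - kF)' = f (k - m^2).  In (i), W - vF vanishes on [0, r), so m^2 = v
   where f > 0.  In (ii), W - c^2 F has zero derivative on (0, r), so it keeps its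
   value W(0) - c^2 = V(X) - c^2. *)

Section lebesgue_translation.
Context {R : realType}.
Notation leb := (@lebesgue_measure R).

Let subr (t : R) : measurableTypeR R -> measurableTypeR R := fun x => x - t.

Let measurable_subr (t : R) : measurable_fun setT (subr t).
Proof. by apply: measurable_funB => //; exact: measurable_cst. Qed.

Lemma lebesgue_measure_shift (t : R) (A : set R) : measurable A ->
  leb ((fun x => x - t) @^-1` A) = leb A.
Proof.
move=> mA.
pose mu : {measure set (measurableTypeR R) -> \bar R} := pushforward leb (subr t).
rewrite (@lebesgue_measure_unique R (mu (measurable_subr t)) _ A mA) //.
move=> _ [[a b] _ <-]; rewrite /= /pushforward /subr.
have -> : (fun x => x - t) @^-1` `]a, b] = `](a + t), (b + t)]%classic.
  by apply/seteqP; split => x /=; rewrite !in_itv /= ltrBrDr lerBlDr.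
rewrite !lebesgue_measure_itv /= !lte_fin ltrD2r.
by case: ifPn => // _; rewrite -!EFinB opprD addrACA subrr addr0.
Qed.

Lemma integral_shift (t : R) (k : R -> R) (D : set R) :
  measurable D -> measurable_fun setT k ->
  (\int[leb]_(x in D) (k (x + t))%:E =
   \int[leb]_(x in (fun x => x - t)%R @^-1` D) (k x)%:E)%E.
Proof.
move=> mD mk.
have mkt : measurable_fun setT (fun x : R => k (x + t)).
  by apply: measurableT_comp => //; apply: measurable_funD => //; exact: measurable_cst.
rewrite (eq_measure_integral (pushforward leb (subr t))); last first.
  by move=> A mA _; exact/esym/lebesgue_measure_shift.
rewrite integralE [RHS]integralE !ge0_integral_pushforward //;
  do ?[by move=> ? _; exact: funepos_ge0 | by move=> ? _; exact: funeneg_ge0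
      | exact/measurable_funepos/measurable_EFinP/measurable_funTS
      | exact/measurable_funeneg/measurable_EFinP/measurable_funTS].
by congr (_ - _)%E; apply: eq_integral => x _; rewrite /= ?funeposE ?funenegE /= subrK.
Qed.

Lemma Rintegral_itvoy_shift (a t : R) (k : R -> R) : measurable_fun setT k ->
  Rintegral leb `]a, +oo[ (fun x => k (x + t)) = Rintegral leb `](a + t), +oo[ k.
Proof.
move=> mk; rewrite /Rintegral integral_shift //; congr (fine (integral _ _ _)).
by apply/seteqP; split => x /=; rewrite !in_itv /= !andbT ltrBrDr.
Qed.

End lebesgue_translation.

Section tail_integral.
Context {R : realType}.
Notation leb := (@lebesgue_measure R).
Variable g : R -> R.
Hypothesis int_g : leb.-integrable setT (EFin \o g).

Let int_g_itv (i : interval R) : leb.-integrable [set` i] (EFin \o g).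
Proof. exact: integrableS int_g. Qed.

Lemma tail_integralE (a x : R) : a <= x ->
  Rintegral leb `]x, +oo[ g
  = Rintegral leb `]a, +oo[ g - parameterized_integral leb a x g.
Proof.
move=> ax; rewrite /parameterized_integral -Rintegral_itv_obnd_cbnd //.
by rewrite Rintegral_itvB.
Qed.

Let near_tail_integralE (t : R) : \forall x \near t,
  Rintegral leb `](t - 1), +oo[ g - parameterized_integral leb (t - 1) x g
  = Rintegral leb `]x, +oo[ g.
Proof.
have : t - 1 < t by rewrite gtrBl.
by move/lt_nbhsr; apply: filterS => x /ltW /tail_integralE ->.
Qed.

Lemma is_derive_tail_integral (t : R) : {for t, continuous g} ->
  is_derive t 1 (fun x => Rintegral leb `]x, +oo[ g) (- g t).
Proof.
move=> cg.
have [||dP P't] := @continuous_FTC1 R g (BLeft (t - 1)) t (t + 1) _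
  (int_g_itv _) _ cg.
- by rewrite ltrDl.
- by rewrite /Order.lt /=; lra.
apply: near_eq_is_derive (near_tail_integralE t) _.
rewrite -[- g t]sub0r; apply: is_deriveB.
by rewrite -P't derive1E; exact: derivableP.
Qed.

Lemma continuous_tail_integral (t : R) :
  {for t, continuous (fun x => Rintegral leb `]x, +oo[ g)}.
Proof.
have sub : t - 1 < t + 1 by lra.
have /(continuous_within_itvP _ sub) [cP _ _] :=
  @parameterized_integral_continuous R _ _ g (ltW sub) (int_g_itv _).
have {}cP : {for t, continuous (fun x => parameterized_integral leb (t - 1) x g)}.
  by apply: cP; rewrite in_itv /=; apply/andP; split; lra.
have E := near_tail_integralE t.
rewrite /prop_for /continuous_at -(nbhs_singleton E).
by apply: cvg_trans (near_eq_cvg E) _; apply: cvgB => //; exact: cvg_cst.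
Qed.

End tail_integral.

Lemma Rintegral_itvoy0_setT {R : realType} (k : R -> R) :
  (@lebesgue_measure R).-integrable setT (EFin \o k) ->
  (forall y, y < 0 -> k y = 0) ->
  Rintegral lebesgue_measure `]0, +oo[ k = Rintegral lebesgue_measure setT k.
Proof.
move=> ik k0.
have setTE : [set: R] = `]-oo, 0] `|` `]0, +oo[.
  apply/seteqP; split => x //= _; rewrite !in_itv /= andbT.
  by case: (lerP x 0) => _; [left|right].
have disj : [disjoint `]-oo, (0 : R)] & `]0, +oo[].
  apply/disj_setPS => x [] /=; rewrite !in_itv /= andbT => x0 x1.
  by move: (le_lt_trans x0 x1); rewrite ltxx.
rewrite setTE Rintegral_setU // -?setTE // -Rintegral_itv_bndo_bndc;
  last exact: integrableS ik.
rewrite [X in X + _](_ : _ = 0) ?add0r //.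
rewrite (@eq_Rintegral _ _ _ _ _ (cst 0)) ?Rintegral_cst ?mul0r //.
by move=> x; rewrite inE /= in_itv /= => /k0.
Qed.

Lemma mul_fun_ln_div {R : realType} (h : R -> R) (x a : R) : 0 <= x -> 0 < a ->
  x / a * h (ln (x / a)) = x * h (ln x - ln a) / a.
Proof.
rewrite le_eqVlt => /predU1P[<-|x0 a0]; first by rewrite !mul0r.
by rewrite lnM ?posrE ?invr_gt0 // lnV ?posrE // mulrAC.
Qed.

Section integral_linear_combination.
Context d (T : measurableType d) (R : realType) (mu : {measure set T -> \bar R}).
Variables (D : set T) (g1 g2 g3 : T -> R).
Hypotheses (mD : measurable D) (int_g1 : mu.-integrable D (EFin \o g1))
  (int_g2 : mu.-integrable D (EFin \o g2)) (int_g3 : mu.-integrable D (EFin \o g3)).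

Let integrableZ (k : R) (g : T -> R) : mu.-integrable D (EFin \o g) ->
  mu.-integrable D (EFin \o (fun x => k * g x)).
Proof. exact: integrableZl. Qed.

Let integrableD2 (g h : T -> R) : mu.-integrable D (EFin \o g) ->
  mu.-integrable D (EFin \o h) -> mu.-integrable D (EFin \o (fun x => g x + h x)).
Proof. exact: integrableD. Qed.

Lemma integrable_comb3 (a b c : R) :
  mu.-integrable D (EFin \o (fun x => a * g1 x + b * g2 x + c * g3 x)).
Proof. by do 2?apply: integrableD2; apply: integrableZ. Qed.

Lemma Rintegral_comb3 (a b c : R) :
  Rintegral mu D (fun x => a * g1 x + b * g2 x + c * g3 x)
  = a * Rintegral mu D g1 + b * Rintegral mu D g2 + c * Rintegral mu D g3.
Proof.
have int_g12 : mu.-integrable D (EFin \o (fun x => a * g1 x + b * g2 x)).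
  by apply: integrableD2; apply: integrableZ.
by rewrite !RintegralD ?RintegralZl //; apply: integrableZ.
Qed.

End integral_linear_combination.

Section residual_lifetime.
Context {R : realType} (f : R -> R).
Notation leb := (@lebesgue_measure R).
Hypothesis pdf_f : is_pdf f.
Hypothesis int_flnf2 : leb.-integrable setT (fun x => (f x * ln (f x) ^+ 2)%:E).

Let measurable_f : measurable_fun setT f. Proof. by case: pdf_f. Qed.
Let f_ge0 x : 0 <= f x. Proof. by case: pdf_f. Qed.
Let f_lt0 x : x < 0 -> f x = 0. Proof. by case: pdf_f => _ _ + _; apply. Qed.
Let integral_f : (\int[leb]_x (f x)%:E = 1)%E. Proof. by case: pdf_f. Qed.

Let integrable_f : leb.-integrable setT (EFin \o f).
Proof.
apply/integrableP; split; first exact/measurable_EFinP.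
under eq_integral do rewrite /= ger0_norm //.
by rewrite integral_f ltry.
Qed.

Let integrable_flnf : leb.-integrable setT (EFin \o (fun x => f x * ln (f x))).
Proof.
apply: le_integrable (integrableD measurableT integrable_f int_flnf2) => //.
  apply/measurable_EFinP; apply: measurable_funM => //.
  by apply: measurableT_comp => //; exact: measurable_ln.
move=> x _; rewrite /= !lee_fin [X in _ <= X]ger0_norm; last first.
  exact: addr_ge0 (f_ge0 x) (mulr_ge0 (f_ge0 x) (sqr_ge0 _)).
rewrite normrM (ger0_norm (f_ge0 x)).
rewrite -[X in _ <= X + _]mulr1 -mulrDr ler_wpM2l //.
have := sqr_ge0 (`|ln (f x)| - 1); rewrite -[ln (f x) ^+ 2]real_normK ?num_real //.
nra.
Qed.

Let comb (a b c x : R) := a * (f x * ln (f x) ^+ 2) + b * (f x * ln (f x)) + c * f x.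

Let integrable_comb (a b c : R) (D : set R) : measurable D ->
  leb.-integrable D (EFin \o comb a b c).
Proof.
move=> mD; apply: integrable_comb3 => //.
- exact: integrableS int_flnf2.
- exact: integrableS integrable_flnf.
- exact: integrableS integrable_f.
Qed.

Let measurable_comb (a b c : R) : measurable_fun setT (comb a b c).
Proof. by have /integrableP[/measurable_EFinP] := integrable_comb a b c setT measurableT. Qed.

Definition tail_flnf (t : R) := Rintegral leb `]t, +oo[ (fun x => f x * ln (f x)).
Definition tail_flnf2 (t : R) := Rintegral leb `]t, +oo[ (fun x => f x * ln (f x) ^+ 2).

Let Rintegral_tail_comb (a b c t : R) : Rintegral leb `]t, +oo[ (comb a b c)
  = a * tail_flnf2 t + b * tail_flnf t + c * survival f t.
Proof.
apply: Rintegral_comb3 => //.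
- exact: integrableS int_flnf2.
- exact: integrableS integrable_flnf.
- exact: integrableS integrable_f.
Qed.

Lemma survival0 : survival f 0 = 1.
Proof. by rewrite /survival Rintegral_itvoy0_setT // /Rintegral integral_f. Qed.

Lemma resid_pdf0 : resid_pdf f 0 = f.
Proof. by apply/funext => x; rewrite /resid_pdf addr0 survival0 divr1. Qed.

Lemma residual_entropyE (t : R) : 0 < survival f t ->
  residual_entropy f t = ln (survival f t) - tail_flnf t / survival f t.
Proof.
rewrite /residual_entropy; set a := survival f t => a0.
have pw x : resid_pdf f t x * ln (resid_pdf f t x) = comb 0 a^-1 (- ln a / a) (x + t).
  by rewrite /resid_pdf -/a (mul_fun_ln_div id) // /comb; field; exact: lt0r_neq0.
under eq_Rintegral do rewrite pw.
rewrite Rintegral_itvoy_shift // add0r Rintegral_tail_comb -/a.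
by field; exact: lt0r_neq0.
Qed.

Definition scaled_varentropy (t : R) :=
  tail_flnf2 t - tail_flnf t ^+ 2 / survival f t.

Lemma residual_varentropyE (t : R) : 0 < survival f t ->
  residual_varentropy f t = scaled_varentropy t / survival f t.
Proof.
rewrite /residual_varentropy /scaled_varentropy; set a := survival f t => a0.
have -> : residual_entropy f t = ln a - tail_flnf t / a by exact: residual_entropyE.
set e := ln a - _.
have pw x : resid_pdf f t x * (ln (resid_pdf f t x) + e) ^+ 2
    = comb a^-1 (2 * (e - ln a) / a) ((e - ln a) ^+ 2 / a) (x + t).
  rewrite /resid_pdf -/a (mul_fun_ln_div (fun u => (u + e) ^+ 2)) // /comb.
  by field; exact: lt0r_neq0.
under eq_Rintegral do rewrite pw.
rewrite Rintegral_itvoy_shift // add0r Rintegral_tail_comb -/a /e.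
by field; exact: lt0r_neq0.
Qed.

Lemma residual_entropy0 : residual_entropy f 0 = entropy f.
Proof.
rewrite /residual_entropy resid_pdf0 /entropy Rintegral_itvoy0_setT //.
by move=> y /f_lt0 ->; rewrite mul0r.
Qed.

Lemma residual_varentropy0 : residual_varentropy f 0 = varentropy f.
Proof.
rewrite /residual_varentropy /varentropy resid_pdf0 residual_entropy0.
have -> : (fun x => f x * (ln (f x) + entropy f) ^+ 2)
    = comb 1 (2 * entropy f) (entropy f ^+ 2).
  by apply/funext => x; rewrite /comb; ring.
rewrite Rintegral_itvoy0_setT //; first exact: integrable_comb.
by move=> y /f_lt0; rewrite /comb => ->; rewrite !(mul0r, mulr0, addr0).
Qed.

Lemma residual_entropy_add_ln_hazard (t : R) : 0 < f t -> 0 < survival f t ->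
  residual_entropy f t + ln (hazard f t) = ln (f t) - tail_flnf t / survival f t.
Proof.
move=> ft Ft; rewrite residual_entropyE // /hazard lnM ?posrE ?invr_gt0 // lnV ?posrE //.
by rewrite addrC addrA subrK addrC.
Qed.

Section derivative.
Variable t : R.
Hypotheses (ft : 0 < f t) (cf : {for t, continuous f}) (Ft : 0 < survival f t).

Let continuous_ln_f : {for t, continuous (fun x => ln (f x))}.
Proof. exact: continuous_comp cf (continuous_ln ft). Qed.

Let is_derive_survival : is_derive t 1 (survival f) (- f t).
Proof. exact: is_derive_tail_integral. Qed.

Let is_derive_tail_flnf : is_derive t 1 tail_flnf (- (f t * ln (f t))).
Proof. exact/is_derive_tail_integral/(cvgM cf continuous_ln_f). Qed.

Let is_derive_tail_flnf2 : is_derive t 1 tail_flnf2 (- (f t * ln (f t) ^+ 2)).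
Proof.
exact/is_derive_tail_integral/(cvgM cf (cvgM continuous_ln_f continuous_ln_f)).
Qed.

Lemma is_derive_scaled_varentropy : is_derive t 1 scaled_varentropy
  (- f t * (residual_entropy f t + ln (hazard f t)) ^+ 2).
Proof.
rewrite residual_entropy_add_ln_hazard //.
have := is_deriveB is_derive_tail_flnf2 (is_deriveM (is_deriveM
  is_derive_tail_flnf is_derive_tail_flnf) (is_deriveV (lt0r_neq0 Ft) is_derive_survival)).
have -> : tail_flnf2 - tail_flnf * tail_flnf * (fun x => (survival f x)^-1)
    = scaled_varentropy by apply/funext => x; rewrite /scaled_varentropy !fctE.
have scaleE (a b : R) : a *: b = a * b by [].
congr is_derive; rewrite /= !fctE !scaleE.
by field; exact: lt0r_neq0.
Qed.

End derivative.

Lemma continuous_scaled_varentropy (t : R) : 0 < survival f t ->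
  {for t, continuous scaled_varentropy}.
Proof.
move=> Ft; apply: cvgB; first exact: continuous_tail_integral.
apply: cvgM; first by apply: cvgM; exact: continuous_tail_integral.
by apply: cvgV; [exact: lt0r_neq0 | exact: continuous_tail_integral].
Qed.

Section support.
Variable r : \bar R.
Hypotheses (f_gt0 : forall t, 0 < t -> (t%:E < r)%E -> 0 < f t)
  (f_cont : forall t, 0 < t -> (t%:E < r)%E -> {for t, continuous f}).

Let exists_gt_lt_r (t : R) : (t%:E < r)%E -> exists2 s, t < s & (s%:E < r)%E.
Proof.
case: r => [r'||] //= tr; last by exists (t + 1); [rewrite ltrDl | exact: ltry].
by exists ((t + r') / 2); rewrite ?lte_fin; rewrite lte_fin in tr; lra.
Qed.

Let near_support (t : R) : 0 < t -> (t%:E < r)%E ->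
  \forall x \near t, 0 < x /\ (x%:E < r)%E.
Proof.
move=> t0; case: r => [r'||] //= tr; near=> x;
  (split; first by near: x; exact: lt_nbhsr).
  by rewrite lte_fin; near: x; apply: lt_nbhsl; rewrite -lte_fin.
exact: ltry.
Unshelve. all: by end_near. Qed.

Lemma survival_gt0 (t : R) : 0 <= t -> (t%:E < r)%E -> 0 < survival f t.
Proof.
move=> t0 tr; have [s ts sr] := exists_gt_lt_r t tr.
have in_support x : t < x -> x < s -> 0 < x /\ (x%:E < r)%E.
  move=> tx xs; split; first exact: le_lt_trans tx.
  by apply: lt_trans sr; rewrite lte_fin.
have dF x : x \in `]t, s[ -> is_derive x 1 (survival f) (- f x).
  rewrite in_itv /= => /andP[tx xs]; have [x0 xr] := in_support x tx xs.
  exact: is_derive_tail_integral integrable_f x (f_cont x x0 xr).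
have cF : {within `[t, s], continuous (survival f)}.
  by apply/continuous_subspaceT => x; exact: continuous_tail_integral.
have [c] := MVT ts dF cF; rewrite in_itv /= => /andP[tc cs].
have [c0 cr] := in_support c tc cs.
have Fs : 0 <= survival f s by apply: Rintegral_ge0 => x _.
have : 0 < f c * (s - t) by rewrite mulr_gt0 ?subr_gt0 ?f_gt0.
lra.
Qed.

Let is_derive_scaled_varentropy_sub (k t : R) : 0 < t -> (t%:E < r)%E ->
  is_derive t 1 (fun x => scaled_varentropy x - k * survival f x)
    (f t * (k - (residual_entropy f t + ln (hazard f t)) ^+ 2)).
Proof.
move=> t0 tr; have Ft := survival_gt0 t (ltW t0) tr.
have := is_deriveB (is_derive_scaled_varentropy t (f_gt0 t t0 tr) (f_cont t t0 tr) Ft)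
  (is_deriveZ k (is_derive_tail_integral _ integrable_f _ (f_cont t t0 tr))).
have -> : scaled_varentropy - k \*: survival f
    = (fun x => scaled_varentropy x - k * survival f x) by [].
by congr is_derive; rewrite /GRing.scale /=; ring.
Qed.

Lemma normr_entropy_hazard_of_constant_varentropy (v : R) :
  (forall t, 0 <= t -> (t%:E < r)%E -> residual_varentropy f t = v) ->
  forall t, 0 < t -> (t%:E < r)%E ->
    `|residual_entropy f t + ln (hazard f t)| = Num.sqrt v.
Proof.
move=> hv t t0 tr.
have near_cst : \forall x \near t,
    scaled_varentropy x - v * survival f x = cst 0 x.
  apply: filterS (near_support t t0 tr) => x [x0 xr].
  have Fx := survival_gt0 x (ltW x0) xr.
  rewrite /cst -(hv x (ltW x0) xr) residual_varentropyE //.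
  by field; exact: lt0r_neq0.
have d0 := near_eq_is_derive near_cst (is_derive_scaled_varentropy_sub v t t0 tr).
have := @derive_val _ _ _ _ _ _ _ d0; rewrite derive_cst => /esym /eqP.
rewrite mulf_eq0 (gt_eqF (f_gt0 t t0 tr)) subr_eq0 /= => /eqP ->.
by rewrite sqrtr_sqr.
Qed.

Lemma varentropy_of_constant_entropy_hazard (c : R) :
  (forall t, 0 < t -> (t%:E < r)%E -> residual_entropy f t + ln (hazard f t) = c) ->
  forall t, 0 <= t -> (t%:E < r)%E ->
    residual_varentropy f t = c ^+ 2 + (varentropy f - c ^+ 2) / survival f t.
Proof.
move=> hc t; rewrite le_eqVlt => /predU1P[<- _|t0 tr].
  by rewrite residual_varentropy0 survival0 divr1 addrC subrK.
pose psi x := scaled_varentropy x - c ^+ 2 * survival f x.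
have dpsi x : x \in `]0, t[ -> is_derive x 1 psi 0.
  rewrite in_itv /= => /andP[x0 xt].
  have xr : (x%:E < r)%E by apply: lt_trans tr; rewrite lte_fin.
  have := is_derive_scaled_varentropy_sub (c ^+ 2) x x0 xr.
  by rewrite hc // subrr mulr0.
have cpsi : {within `[0, t], continuous psi}.
  apply: continuous_in_subspaceT => x; rewrite inE /= in_itv /= => /andP[x0 xt].
  have xr : (x%:E < r)%E by apply: le_lt_trans tr; rewrite lee_fin.
  have Fx := survival_gt0 x x0 xr.
  apply: cvgB; first exact: continuous_scaled_varentropy.
  by apply: cvgM; [exact: cvg_cst | exact: continuous_tail_integral].
have [y _] := MVT t0 dpsi cpsi.
rewrite mul0r => /eqP; rewrite subr_eq0 => /eqP psi_t.
have Ft := survival_gt0 t (ltW t0) tr.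
have scaled0 : scaled_varentropy 0 = varentropy f.
  by rewrite -residual_varentropy0 residual_varentropyE survival0 ?divr1.
rewrite residual_varentropyE // -[scaled_varentropy t](subrK (c ^+ 2 * survival f t)).
rewrite -/(psi t) psi_t /psi scaled0 survival0.
by field; exact: lt0r_neq0.
Qed.

End support.

End residual_lifetime.

Theorem theorem3p2 (R : realType) (f : R -> R) (r : \bar R) :
  is_pdf f ->
  (0 < r)%E ->
  (forall t : R, 0 < t -> (t%:E < r)%E -> 0 < f t) ->
  (forall t : R, 0 < t -> (t%:E < r)%E -> {for t, continuous f}) ->
  (@lebesgue_measure R).-integrable setT
     (fun x => (f x * ln (f x) ^+ 2)%:E) ->
  (forall v : R, 0 <= v ->
     (forall t : R, 0 <= t -> (t%:E < r)%E -> residual_varentropy f t = v) ->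
     forall t : R, 0 < t -> (t%:E < r)%E ->
       `|residual_entropy f t + ln (hazard f t)| = Num.sqrt v)
  /\
  (forall c : R,
     (forall t : R, 0 < t -> (t%:E < r)%E ->
        residual_entropy f t + ln (hazard f t) = c) ->
     forall t : R, 0 <= t -> (t%:E < r)%E ->
       residual_varentropy f t
         = c ^+ 2 + (varentropy f - c ^+ 2) / survival f t).
Proof.
move=> pdf_f _ f_gt0 f_cont int_flnf2; split.
- by move=> v _; exact: normr_entropy_hazard_of_constant_varentropy.
- exact: varentropy_of_constant_entropy_hazard.
Qed.
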